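(* Let $0<\alpha<\beta$ and let $A:\mathcal{C}_{\alpha}(\mathbb{R})\to\mathcal{C}_{\beta}(\mathbb{R})$ be a bounded linear operator. For $r>0$ let $B_r=\{f\in\mathcal{C}_{\alpha}(\mathbb{R}):\ |f|_{\alpha}<r\}$. Suppose that for every $X>0$ (and every $r>0$) the family of functions $\{(Af)|_{[-X,X]}:\ f\in B_r\}$ is uniformly equicontinuous. Then $A$, regarded as an operator $\mathcal{C}_{\alpha}(\mathbb{R})\to\mathcal{C}_{\alpha}(\mathbb{R})$, is compact.
   Context: For $\gamma\ge 0$, $\mathcal{C}_{\gamma}(\mathbb{R})$ denotes the Banach space of continuous functions $f:\mathbb{R}\to\mathbb{C}$ with $|f|_{\gamma}=\sup\{(1+|x|)^{\gamma}|f(x)|:\ x\in\mathbb{R}\}<\infty$, normed by $|\cdot|_{\gamma}$. *)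

From HB Require Import structures.
From mathcomp Require Import all_boot all_order all_algebra.
From mathcomp Require Import all_classical all_reals all_analysis.
From mathcomp Require Import complex.
Set Implicit Arguments. Unset Strict Implicit. Unset Printing Implicit Defensive.
Import Order.TTheory GRing.Theory Num.Theory.
Local Open Scope ring_scope.
Local Open Scope classical_set_scope.

Definition cabs (R : realType) (z : complex R) : R := ComplexField.Normc.normc z.

Definition wt (R : realType) (gamma x : R) : R := (1 + `|x|) `^ gamma.

Definition ccontinuous (R : realType) (f : R -> complex R) : Prop :=
  forall x eps, 0 < eps -> exists2 delta, 0 < delta &
    forall y, `|x - y| < delta -> cabs (f x - f y) < eps.

Definition inC (R : realType) (gamma : R) (f : R -> complex R) : Prop :=
  ccontinuous f /\ exists M : R, forall x, wt gamma x * cabs (f x) <= M.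

Definition wnorm (R : realType) (gamma : R) (f : R -> complex R) : R :=
  sup [set wt gamma x * cabs (f x) | x in [set: R]].

From HB Require Import structures.
From mathcomp Require Import all_boot all_order all_algebra.
From mathcomp Require Import all_classical all_reals all_analysis.
From mathcomp Require Import complex.
From mathcomp Require Import ring lra.
Import Order.TTheory GRing.Theory Num.Theory numFieldNormedType.Exports.
Local Open Scope ring_scope.
Local Open Scope classical_set_scope.

(* The images v_n := A u_n of a bounded sequence satisfy (1+|x|)^beta |v_n x| <= M, so
   (1+|x|)^alpha |v_n x| <= M (1+|x|)^(alpha-beta) is uniformly small outside a large
   interval [-X, X]. On [-X, X] the v_n are bounded and equicontinuous, so sampling them on
   a finite grid and applying the pigeonhole principle yields an infinite set of indices
   along which they are uniformly close, as in the Arzela-Ascoli theorem. Iterating with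
   tolerances 1/(k+1) and extracting a diagonal subsequence gives a Cauchy sequence for
   |.|_alpha, which converges because C_alpha is complete. *)

Section ComplexModulus.
Context {R : realType}.
Implicit Types z w : complex R.

Lemma cabs_ge0 z : 0 <= cabs z.
Proof. by case: z => a b; rewrite /cabs /= sqrtr_ge0. Qed.

Lemma cabsN z : cabs (- z) = cabs z.
Proof. exact: normcN. Qed.

Lemma cabsD z w : cabs (z + w) <= cabs z + cabs w.
Proof. exact: le_normcD. Qed.

Lemma cabs_distC z w : cabs (z - w) = cabs (w - z).
Proof. by rewrite -cabsN opprB. Qed.

Lemma cabsB_le z w : cabs (z - w) <= cabs z + cabs w.
Proof. by rewrite -(cabsN w); apply: cabsD. Qed.

Lemma cabs_triangle3 (a b c d : complex R) :
  cabs (a - d) <= cabs (a - b) + cabs (b - c) + cabs (c - d).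
Proof.
have -> : a - d = (a - b) + ((b - c) + (c - d)) by rewrite !addrA !subrK.
by rewrite addrA; apply: le_trans (cabsD _ _) _; rewrite lerD2r cabsD.
Qed.

Lemma ReB z w : complex.Re (z - w) = complex.Re z - complex.Re w.
Proof. by case: z; case: w. Qed.

Lemma ImB z w : complex.Im (z - w) = complex.Im z - complex.Im w.
Proof. by case: z; case: w. Qed.

Lemma normr_Re_le z : `|complex.Re z| <= cabs z.
Proof.
case: z => a b; rewrite /cabs /= -ler_sqr ?nnegrE ?sqrtr_ge0 //.
by rewrite sqr_sqrtr ?addr_ge0 ?sqr_ge0 // real_normK ?num_real // lerDl sqr_ge0.
Qed.

Lemma normr_Im_le z : `|complex.Im z| <= cabs z.
Proof.
case: z => a b; rewrite /cabs /= -ler_sqr ?nnegrE ?sqrtr_ge0 //.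
by rewrite sqr_sqrtr ?addr_ge0 ?sqr_ge0 // real_normK ?num_real // lerDr sqr_ge0.
Qed.

Lemma cabs_le_ReIm z : cabs z <= `|complex.Re z| + `|complex.Im z|.
Proof.
case: z => a b; rewrite /cabs /= -ler_sqr ?nnegrE ?addr_ge0 ?sqrtr_ge0 //.
rewrite sqr_sqrtr ?addr_ge0 ?sqr_ge0 // sqrrD !real_normK ?num_real //.
by rewrite -addrA lerD2l lerDr mulrn_wge0 // mulr_ge0.
Qed.

End ComplexModulus.

Section Weights.
Context {R : realType}.
Implicit Types gamma x : R.

Lemma wt_ge1 gamma x : 0 <= gamma -> 1 <= wt gamma x.
Proof.
by move=> g0; have := @ler_powR _ (1 + `|x|) _ 0 gamma; rewrite powRr0 lerDl => ->.
Qed.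

Lemma wt_gt0 gamma x : 0 <= gamma -> 0 < wt gamma x.
Proof. by move=> g0; apply: lt_le_trans ltr01 (wt_ge1 _ x g0). Qed.

Lemma wt_le_exponent alpha beta x : alpha <= beta -> wt alpha x <= wt beta x.
Proof. by move=> ab; rewrite /wt ler_powR ?lerDl. Qed.

Lemma wt_le_norm gamma x y : 0 <= gamma -> `|x| <= `|y| -> wt gamma x <= wt gamma y.
Proof. by move=> g0 xy; rewrite /wt ge0_ler_powR ?nnegrE ?addr_ge0 ?lerD2l. Qed.

Lemma wt_addr alpha beta x : wt (alpha + beta) x = wt alpha x * wt beta x.
Proof.
by rewrite /wt powRD // (_ : 1 + `|x| != 0) ?implybT // gt_eqF // ltr_pwDl.
Qed.

Lemma ler_wtMl gamma x c : 0 <= gamma -> 0 <= c -> c <= wt gamma x * c.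
Proof. by move=> g0 c0; rewrite ler_peMl // wt_ge1. Qed.

End Weights.

Lemma wt_tail_le (R : realType) (alpha beta M eps c x : R) :
  0 <= alpha -> alpha < beta -> 0 < eps -> 0 <= c -> wt beta x * c <= M ->
  (M / eps + 1) `^ (beta - alpha)^-1 <= `|x| -> wt alpha x * c <= eps.
Proof.
move=> a0 ab e0 c0 cM xbig.
have b0 : 0 <= beta by apply: le_trans a0 (ltW ab).
have M0 : 0 <= M by apply: le_trans cM; rewrite mulr_ge0 // ltW // wt_gt0.
set gam := beta - alpha; have g0 : 0 < gam by rewrite subr_gt0.
set t := M / eps; have t0 : 0 <= t by rewrite divr_ge0 // ltW.
have tw : t + 1 <= wt gam x.
  have -> : t + 1 = ((t + 1) `^ gam^-1) `^ gam.
    by rewrite -powRrM mulVf ?gt_eqF // powRr1 // addr_ge0.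
  apply: ge0_ler_powR; [exact: ltW | by rewrite nnegrE powR_ge0 | by rewrite nnegrE |].
  by apply: (le_trans xbig); rewrite lerDr.
have : wt alpha x * c * (t + 1) <= t * eps.
  rewrite /t divfK ?gt_eqF //; apply: le_trans cM.
  have -> : beta = alpha + gam by rewrite /gam addrC subrK.
  by rewrite wt_addr mulrAC ler_wpM2r // ler_wpM2l // ltW // wt_gt0.
have : 0 <= wt alpha x * c by rewrite mulr_ge0 // ltW // wt_gt0.
nra.
Qed.

Section WeightedNorm.
Context {R : realType} {gamma : R}.
Implicit Type f : R -> complex R.

Lemma wnorm_ub f x : inC gamma f -> wt gamma x * cabs (f x) <= wnorm gamma f.
Proof.
move=> [_ [M fM]]; apply: sup_upper_bound; last by exists x.
split; first by exists (wt gamma 0 * cabs (f 0)), 0.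
by exists M => _ [y _ <-].
Qed.

Lemma wnorm_le f e : (forall x, wt gamma x * cabs (f x) <= e) -> wnorm gamma f <= e.
Proof.
move=> fe; apply: ge_sup; first by exists (wt gamma 0 * cabs (f 0)), 0.
by move=> _ [y _ <-].
Qed.

Lemma wnorm_ge0 f : 0 <= gamma -> 0 <= wnorm gamma f.
Proof.
move=> g0; have [fbd|nbd] := pselect (has_sup [set wt gamma x * cabs (f x) | x in [set: R]]).
  apply: le_trans (sup_upper_bound fbd _); last by exists 0.
  by rewrite mulr_ge0 ?cabs_ge0 // ltW // wt_gt0.
by rewrite /wnorm sup_out.
Qed.

End WeightedNorm.

Lemma inC_le_exponent (R : realType) (alpha beta : R) f :
  0 <= alpha <= beta -> inC beta f -> inC alpha f.
Proof.
move=> /andP[a0 ab] [fcont [M fM]]; split => //; exists M => x.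
by apply: le_trans (fM x); rewrite ler_wpM2r ?cabs_ge0 ?wt_le_exponent.
Qed.

Section PointwiseLimit.
Context {R : realType}.

Lemma real_cauchy_cvg (h : nat -> R) :
  (forall e, 0 < e -> exists k, forall m n, (k <= m)%N -> (k <= n)%N -> `|h m - h n| <= e) ->
  cvg (h @ \oo).
Proof.
move=> hC; apply: cauchy_cvg; apply: cauchy_exP => e e0.
have e2 : 0 < e / 2 by rewrite divr_gt0.
have [k hk] := hC _ e2.
exists (h k), k => // m km; rewrite /ball /= (le_lt_trans (hk _ _ (leqnn k) km)) //.
by rewrite ltr_pdivrMr // ltr_pMr // ltr1n.
Qed.

Lemma lim_dist_le (h : nat -> R) a c k : cvg (h @ \oo) ->
  (forall m, (k <= m)%N -> `|h m - a| <= c) -> `|lim (h @ \oo) - a| <= c.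
Proof.
move=> hcvg hk; rewrite ler_distl; apply/andP; split.
  by apply: limr_ge => //; exists k => // m /hk; rewrite ler_distl => /andP[].
by apply: limr_le => //; exists k => // m /hk; rewrite ler_distl => /andP[].
Qed.

Definition clim (z : nat -> complex R) : complex R :=
  (lim ((fun n => complex.Re (z n)) @ \oo) +i* lim ((fun n => complex.Im (z n)) @ \oo))%C.

Lemma clim_dist_le (z : nat -> complex R) n k c :
  (forall e, 0 < e -> exists k, forall m n, (k <= m)%N -> (k <= n)%N ->
     cabs (z m - z n) <= e) ->
  (forall m, (k <= m)%N -> cabs (z m - z n) <= c) -> cabs (z n - clim z) <= c + c.
Proof.
move=> zC zk; apply: le_trans (cabs_le_ReIm _) _; rewrite ReB ImB.
rewrite /= (distrC (complex.Re _)) (distrC (complex.Im _)).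
apply: lerD; apply: (@lim_dist_le _ _ _ k).
- apply: real_cauchy_cvg => e /zC [j zj]; exists j => m p jm jp.
  by rewrite -ReB; apply: le_trans (normr_Re_le _) (zj _ _ jm jp).
- by move=> m /zk; rewrite -ReB; apply: le_trans (normr_Re_le _).
- apply: real_cauchy_cvg => e /zC [j zj]; exists j => m p jm jp.
  by rewrite -ImB; apply: le_trans (normr_Im_le _) (zj _ _ jm jp).
- by move=> m /zk; rewrite -ImB; apply: le_trans (normr_Im_le _).
Qed.

End PointwiseLimit.

Lemma ccontinuous_uniform_lim (R : realType) (w : nat -> R -> complex R) g :
  (forall n, ccontinuous (w n)) ->
  (forall e, 0 < e -> exists n, forall x, cabs (w n x - g x) <= e) -> ccontinuous g.
Proof.
move=> w_cont w_unif x e e0; have e3 : 0 < e / 3 by rewrite divr_gt0.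
have [n wn] := w_unif _ e3; have [d d0 wd] := w_cont n x _ e3.
exists d => // y /wd xy; have := cabs_triangle3 (g x) (w n x) (w n y) (g y).
by rewrite (cabs_distC (g x) (w n x)); have := wn x; have := wn y; lra.
Qed.

Section WeightedCompleteness.
Context {R : realType}.
Variables (gamma : R) (w : nat -> R -> complex R).
Hypotheses (gamma_ge0 : 0 <= gamma) (w_in : forall n, inC gamma (w n)).
Hypothesis w_cauchy : forall e, 0 < e -> exists k, forall m n, (k <= m)%N -> (k <= n)%N ->
  forall x, wt gamma x * cabs (w m x - w n x) <= e.

Let wlim x := clim (fun n => w n x).

Lemma wlim_near e : 0 < e ->
  exists k, forall n, (k <= n)%N -> forall x, wt gamma x * cabs (w n x - wlim x) <= e.
Proof.
move=> e0; have e2 : 0 < e / 2 by rewrite divr_gt0.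
have [k wk] := w_cauchy _ e2.
exists k => n kn x; have W0 := wt_gt0 gamma x gamma_ge0.
set c := e / 2 / wt gamma x.
have : cabs (w n x - wlim x) <= c + c.
  apply: (@clim_dist_le _ _ _ k) => [e' /w_cauchy [j wj] | m km].
    exists j => m p jm jp.
    exact: le_trans (ler_wtMl _ _ _ gamma_ge0 (cabs_ge0 _)) (wj _ _ jm jp x).
  by rewrite /c ler_pdivlMr // mulrC wk.
by rewrite -ler_pdivlMl // /c -mulrDl -splitr mulrC.
Qed.

Lemma weighted_cauchy_lim :
  exists2 g, inC gamma g & (fun n => wnorm gamma (fun x => w n x - g x)) @ \oo --> 0.
Proof.
exists wlim; first split.
- apply: (@ccontinuous_uniform_lim _ w) => [n | e /wlim_near [k wk]].
    by case: (w_in n).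
  exists k => x; apply: le_trans (wk k (leqnn k) x).
  exact: ler_wtMl _ _ _ gamma_ge0 (cabs_ge0 _).
- have [k wk] := wlim_near _ ltr01; have [_ [M wM]] := w_in k.
  exists (1 + M) => x; have W0 := wt_gt0 gamma x gamma_ge0.
  have := cabsB_le (wlim x - w k x) (- w k x); rewrite opprK subrK cabsN.
  rewrite cabs_distC -(ler_pM2l W0) mulrDr => /le_trans; apply.
  by rewrite lerD ?wk ?wM.
- apply/cvgrPdist_le => e /wlim_near [k wk]; exists k => // n kn.
  by rewrite sub0r normrN ger0_norm ?wnorm_ge0 // wnorm_le // => x; apply: wk.
Qed.

End WeightedCompleteness.

Definition unbounded (I : set nat) := forall N, exists2 n, (N <= n)%N & I n.

Definition refinable (P : nat -> nat -> Prop) := forall I, unbounded I ->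
  exists J, [/\ unbounded J, J `<=` I & forall m n, J m -> J n -> P m n].

Lemma unbounded_split {I} (Q : set nat) :
  unbounded I -> unbounded (I `&` Q) \/ unbounded (I `&` ~` Q).
Proof.
move=> Iunb; have [|/existsNP [N1 N1Q]] := pselect (unbounded (I `&` Q)); first by left.
right => N2; have [n N12n In] := Iunb (maxn N1 N2).
exists n; first by apply: leq_trans N12n; apply: leq_maxr.
split => // Qn; apply: N1Q; exists n => //; apply: leq_trans N12n; apply: leq_maxl.
Qed.

Lemma refinable_impl {P Q : nat -> nat -> Prop} :
  refinable P -> (forall m n, P m n -> Q m n) -> refinable Q.
Proof.
move=> Pref PQ I /Pref [J [Junb JI JP]].
by exists J; split => // m n Jm Jn; apply/PQ/JP.
Qed.

Lemma refinable_and {P Q : nat -> nat -> Prop} :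
  refinable P -> refinable Q -> refinable (fun m n => P m n /\ Q m n).
Proof.
move=> Pref Qref I /Pref [J [/Qref [J' [J'unb J'J J'Q]] JI JP]].
exists J'; split => [//|n /J'J /JI //|m n J'm J'n].
by split; [apply: JP; apply: J'J | apply: J'Q].
Qed.

Lemma refinable_all {P : nat -> nat -> nat -> Prop} K :
  (forall j, (j < K)%N -> refinable (P j)) ->
  refinable (fun m n => forall j, (j < K)%N -> P j m n).
Proof.
elim: K => [_ I Iunb|K IH PKref]; first by exists I; split.
have PKref' : forall j, (j < K)%N -> refinable (P j).
  by move=> j jK; apply: PKref; rewrite ltnS ltnW.
move: (refinable_and (IH PKref') (PKref K (ltnSn K))) => /refinable_impl.
apply=> m n [PK PKn] j.
by rewrite ltnS leq_eqVlt => /predU1P[->|/PK].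
Qed.

Section Pigeonhole.
Context {R : realType}.

Lemma unbounded_cluster (h : nat -> R) (s : R) N a I : 0 < s -> unbounded I ->
  (forall n, I n -> a <= h n <= a + N%:R * s) ->
  exists J, [/\ unbounded J, J `<=` I & forall m n, J m -> J n -> `|h m - h n| <= s].
Proof.
move=> s_gt0; elim: N a I => [|N IH] a I Iunb Ih.
  exists I; split=> // m n /Ih + /Ih; rewrite mul0r addr0 -!eq_le => /eqP <- /eqP <-.
  by rewrite subrr normr0 ltW.
have [low|high] := unbounded_split [set n | h n <= a + s] Iunb.
  exists (I `&` [set n | h n <= a + s]); split => // m n [/Ih hm ms] [/Ih hn ns].
  move: hm hn ms ns => /andP[am _] /andP[an _] /= ms ns.
  by rewrite ler_distl; apply/andP; split; lra.
have Ihigh n : (I `&` ~` [set n | h n <= a + s]) n -> a + s <= h n <= a + s + N%:R * s.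
  move=> [/Ih /andP[_ hn] /negP]; rewrite -ltNge => /ltW -> /=.
  by move: hn; rewrite -addn1 natrD mulrDl mul1r; lra.
have [J [Junb JI Jh]] := IH (a + s) _ high Ihigh.
by exists J; split => // n /JI [].
Qed.

Lemma refinable_dist (h : nat -> R) B s : 0 < s -> (forall n, `|h n| <= B) ->
  refinable (fun m n => `|h m - h n| <= s).
Proof.
set N := (Num.truncn (2 * B / s)).+1.
move=> s0 hB I Iunb; apply: (unbounded_cluster h s N (- B) I s0 Iunb).
move=> n _; have /andP[hn_ge hn_le] : - B <= h n <= B by rewrite -ler_norml.
rewrite hn_ge /=; have : 2 * B < N%:R * s.
  by rewrite -ltr_pdivrMr // truncnS_gt.
lra.
Qed.

Lemma refinable_cdist (h : nat -> complex R) B s : 0 < s -> (forall n, cabs (h n) <= B) ->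
  refinable (fun m n => cabs (h m - h n) <= s + s).
Proof.
move=> s0 hB.
have Re_ref := refinable_dist (fun n => complex.Re (h n)) B s s0
  (fun n => le_trans (normr_Re_le _) (hB n)).
have Im_ref := refinable_dist (fun n => complex.Im (h n)) B s s0
  (fun n => le_trans (normr_Im_le _) (hB n)).
move: (refinable_and Re_ref Im_ref) => /refinable_impl; apply=> m n [Re_mn Im_mn].
by apply: le_trans (cabs_le_ReIm _) _; rewrite ReB ImB lerD.
Qed.

End Pigeonhole.

Lemma diagonal_extraction {P : nat -> nat -> nat -> Prop} :
  (forall k, refinable (P k)) ->
  exists phi : nat -> nat, (forall m n, (m < n)%N -> (phi m < phi n)%N) /\
    forall k m n, (k <= m)%N -> (k <= n)%N -> P k (phi m) (phi n).
Proof.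
move=> Pref.
have /choice [F F_spec] : forall kI : nat * set nat, exists J, unbounded kI.2 ->
    [/\ unbounded J, J `<=` kI.2 & forall m n, J m -> J n -> P kI.1 m n].
  move=> [k I]; have [/(Pref k) [J]|nI] := pselect (unbounded I); first by exists J.
  by exists set0 => /nI.
pose fix Is k := F (k, if k is k'.+1 then Is k' else setT).
have Is_spec k : [/\ unbounded (Is k),
    Is k `<=` (if k is k'.+1 then Is k' else setT) & forall m n, Is k m -> Is k n -> P k m n].
  by elim: k => [|k [Ik_unb _ _]]; apply: F_spec => //= N; exists N.
have Is_decr k m : (k <= m)%N -> Is m `<=` Is k.
  elim: m => [|m IH]; first by rewrite leqn0 => /eqP ->.
  rewrite leq_eqVlt => /predU1P[->//|/IH Imk] n.
  by have [_ sub _] := Is_spec m.+1; move=> /sub /Imk.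
have /choice [G G_spec] : forall kN : nat * nat, exists n, (kN.2 <= n)%N /\ Is kN.1 n.
  by move=> [k N]; have [/(_ N) [n Nn Ikn] _ _] := Is_spec k; exists n.
pose fix phi k := G (k, if k is k'.+1 then (phi k').+1 else 0%N).
have phi_in k : Is k (phi k) by case: k => [|k]; apply: (G_spec (_, _)).2.
exists phi; split.
  apply: (@homo_ltn _ phi (fun a b => (a < b)%N)); first exact: ltn_trans.
  by move=> k; apply: (G_spec (k.+1, _)).1.
move=> k m n km kn; have [_ _ Pk] := Is_spec k.
by apply: Pk; [apply: (Is_decr _ _ km) | apply: (Is_decr _ _ kn)]; apply: phi_in.
Qed.

Lemma interval_grid {R : realType} (X d : R) : 0 <= X -> 0 < d ->
  exists K (y : nat -> R), forall x, `|x| <= X ->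
    exists2 j, (j < K)%N & `|y j| <= X /\ `|x - y j| < d.
Proof.
move=> X0 d0; set h := d / 2.
have h0 : 0 < h by rewrite divr_gt0.
have hd : h < d by rewrite /h ltr_pdivrMr // ltr_pMr // ltr1n.
exists (Num.truncn (2 * X / h)).+1, (fun j => - X + j%:R * h) => x.
rewrite ler_norml => /andP[Xx xX]; set j := Num.truncn ((x + X) / h).
have xX0 : 0 <= (x + X) / h by apply: divr_ge0; [lra | exact: ltW].
have /andP[jx xj] := truncn_itv xX0; rewrite -/j in jx xj.
move: jx xj; rewrite ler_pdivlMr // ltr_pdivrMr // -natr1 mulrDl mul1r => jx xj.
have j0 : 0 <= j%:R * h by rewrite mulr_ge0 // ltW.
exists j; last by rewrite ler_norml ltr_norml; split; apply/andP; split; lra.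
rewrite ltnS truncn_le_nat; apply: le_lt_trans (truncnS_gt _).
by rewrite ler_pM2r ?invr_gt0 //; lra.
Qed.

Section EquicontinuousSequence.
Context {R : realType}.
Variables (alpha beta M : R) (v : nat -> R -> complex R).
Hypotheses (alpha_ge0 : 0 <= alpha) (alpha_lt_beta : alpha < beta).
Hypothesis v_bounded : forall n x, wt beta x * cabs (v n x) <= M.
Hypothesis v_equicont : forall X, 0 < X -> forall e, 0 < e -> exists2 d, 0 < d &
  forall n x y, `|x| <= X -> `|y| <= X -> `|x - y| < d -> cabs (v n x - v n y) < e.

Let beta_ge0 : 0 <= beta. Proof. exact: le_trans alpha_ge0 (ltW alpha_lt_beta). Qed.

Let M_ge0 : 0 <= M.
Proof. by apply: le_trans (v_bounded 0 0); rewrite mulr_ge0 ?cabs_ge0 // ltW // wt_gt0. Qed.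

Lemma refinable_close_on X s : 0 < X -> 0 < s ->
  refinable (fun m n => forall x, `|x| <= X -> cabs (v m x - v n x) <= 4 * s).
Proof.
move=> X0 s0; have [d d0 vd] := v_equicont _ X0 _ s0.
have [K [y grid]] := interval_grid _ _ (ltW X0) d0.
have v_ptwise n x : cabs (v n x) <= M.
  exact: le_trans (ler_wtMl _ _ _ beta_ge0 (cabs_ge0 _)) (v_bounded n x).
have := refinable_all K (fun j _ =>
  refinable_cdist (fun n => v n (y j)) M s s0 (v_ptwise^~ _)).
move=> /refinable_impl; apply=> m n close x xX; have [j jK [yX xy]] := grid x xX.
have := cabs_triangle3 (v m x) (v m (y j)) (v n (y j)) (v n x).
have := vd m _ _ xX yX xy; have := vd n _ _ yX xX; rewrite distrC => /(_ xy).
have := close j jK; lra.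
Qed.

Lemma refinable_weighted_close e : 0 < e ->
  refinable (fun m n => forall x, wt alpha x * cabs (v m x - v n x) <= e).
Proof.
move=> e0; have e2 : 0 < e / 2 by rewrite divr_gt0.
set X := (M / (e / 2) + 1) `^ (beta - alpha)^-1.
have X0 : 0 < X by rewrite powR_gt0 // ltr_wpDl // divr_ge0 // ltW.
set W := wt alpha X; have W0 : 0 < W by rewrite wt_gt0.
set s := e / (4 * W); have s0 : 0 < s by rewrite divr_gt0 // mulr_gt0.
move: (refinable_close_on _ _ X0 s0) => /refinable_impl; apply=> m n close x.
have [xX|/ltW Xx] := lerP `|x| X.
  have -> : e = W * (4 * s) by rewrite /s; field; rewrite gt_eqF.
  apply: ler_pM; [exact: ltW (wt_gt0 _ _ alpha_ge0) | exact: cabs_ge0 | | exact: close].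
  by apply: wt_le_norm => //; rewrite (gtr0_norm X0).
have tail k : wt alpha x * cabs (v k x) <= e / 2.
  exact: (@wt_tail_le _ alpha beta M _ _ x alpha_ge0 alpha_lt_beta e2 (cabs_ge0 _)
    (v_bounded k x)).
apply: le_trans (_ : wt alpha x * (cabs (v m x) + cabs (v n x)) <= _).
  by rewrite ler_wpM2l ?cabsB_le // ltW // wt_gt0.
by rewrite mulrDr (splitr e) lerD.
Qed.

Lemma weighted_cauchy_subseq : exists phi : nat -> nat,
  (forall m n, (m < n)%N -> (phi m < phi n)%N) /\
  forall e, 0 < e -> exists k, forall m n, (k <= m)%N -> (k <= n)%N ->
    forall x, wt alpha x * cabs (v (phi m) x - v (phi n) x) <= e.
Proof.
have natSinv_gt0 k : 0 < k.+1%:R^-1 :> R by rewrite invr_gt0.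
have [phi [phi_incr phi_close]] :=
  diagonal_extraction (fun k => refinable_weighted_close _ (natSinv_gt0 k)).
exists phi; split => // e e0.
have [k _ /(_ k (leqnn k)) ke] := near_infty_natSinv_lt (PosNum e0).
by exists k => m n km kn x; apply: le_trans (ltW ke); apply: phi_close.
Qed.

Lemma equicontinuous_subseq_cvg : (forall n, inC beta (v n)) ->
  exists phi : nat -> nat, (forall m n, (m < n)%N -> (phi m < phi n)%N) /\
  exists2 g : R -> complex R, inC alpha g &
    (fun n => wnorm alpha (fun x => v (phi n) x - g x)) @ \oo --> (0 : R).
Proof.
move=> v_in; have [phi [phi_incr phi_cauchy]] := weighted_cauchy_subseq.
have w_in n : inC alpha (v (phi n)).
  by apply: inC_le_exponent (v_in _); rewrite alpha_ge0 ltW.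
by exists phi; split => //; apply: weighted_cauchy_lim alpha_ge0 w_in phi_cauchy.
Qed.

End EquicontinuousSequence.

Theorem proposition1 (R : realType) (alpha beta : R)
  (A : (R -> complex R) -> (R -> complex R)) :
  0 < alpha -> alpha < beta ->
  (* A maps C_alpha into C_beta *)
  (forall f, inC alpha f -> inC beta (A f)) ->
  (* A is linear on C_alpha *)
  (forall f g, inC alpha f -> inC alpha g ->
     A (fun x => f x + g x) = (fun x => A f x + A g x)) ->
  (forall (c : complex R) f, inC alpha f ->
     A (fun x => c * f x) = (fun x => c * A f x)) ->
  (* A is bounded C_alpha -> C_beta *)
  (exists K : R, forall f, inC alpha f -> wnorm beta (A f) <= K * wnorm alpha f) ->
  (* uniform equicontinuity of {(Af)|[-X,X] : f in B_r} for all X, r > 0 *)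
  (forall X r : R, 0 < X -> 0 < r -> forall eps : R, 0 < eps ->
     exists2 delta : R, 0 < delta &
       forall f, inC alpha f -> wnorm alpha f < r ->
       forall x y : R, `|x| <= X -> `|y| <= X -> `|x - y| < delta ->
         cabs (A f x - A f y) < eps) ->
  (* A : C_alpha -> C_alpha is compact: every bounded sequence has a
     subsequence whose image converges in C_alpha *)
  forall u : nat -> (R -> complex R),
    (forall n, inC alpha (u n)) ->
    (exists C : R, forall n, wnorm alpha (u n) <= C) ->
    exists phi : nat -> nat, (forall m n, (m < n)%N -> (phi m < phi n)%N) /\
    exists2 g : R -> complex R, inC alpha g &
      (fun n => wnorm alpha (fun x => A (u (phi n)) x - g x)) @ \oo --> (0 : R).
Proof.
move=> a0 ab A_in _ _ [K A_bd] A_equi u u_in [C u_bd].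
have Au_in n := A_in _ (u_in n).
have Au_bounded n x : wt beta x * cabs (A (u n) x) <= `|K| * `|C|.
  apply: le_trans (wnorm_ub _ x (Au_in n)) _; apply: le_trans (A_bd _ (u_in n)) _.
  rewrite (le_trans (ler_norm _)) // normrM ler_wpM2l // ger0_norm ?(wnorm_ge0 _ (ltW a0)) //.
  exact: le_trans (u_bd n) (ler_norm C).
have Au_equicont X : 0 < X -> forall e, 0 < e -> exists2 d, 0 < d &
    forall n x y, `|x| <= X -> `|y| <= X -> `|x - y| < d -> cabs (A (u n) x - A (u n) y) < e.
  move=> X0 e e0; have C1 : 0 < `|C| + 1 by rewrite ltr_pwDr.
  have [d d0 Ad] := A_equi X _ X0 C1 e e0; exists d => // n; apply: Ad => //.
  by apply: le_lt_trans (u_bd n) _; rewrite (le_lt_trans (ler_norm C)) // ltrDl.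
exact: equicontinuous_subseq_cvg (ltW a0) ab Au_bounded Au_equicont Au_in.
Qed.
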